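(* Let $n\ge 1$, $d\ge 2$ and $k_1,\dots,k_n\in\{1,\dots,d\}$. Let $\rho$ be a state on $(\mathbb{C}^d)^{\otimes n}$ that can be written as $\rho=\sum_j p_j|\psi_j\rangle\langle\psi_j|$ with $p_j\ge 0$, $\sum_j p_j=1$, where for every $j$ and every $i\in\{1,\dots,n\}$ the single-party reduced state $\mathrm{Tr}_{\overline{\{i\}}}|\psi_j\rangle\langle\psi_j|$ has rank at most $k_i$. Then $$\mathcal{C}_2(\rho)\le d^n+n-1-\sum_{i=1}^n\frac{d}{k_i}.$$
   Context: Consider $n$ qudits with Hilbert space $(\mathbb{C}^d)^{\otimes n}$. Let $\lambda_0=\mathbb{1}_d$ and let $\lambda_1,\dots,\lambda_{d^2-1}$ be Hermitian traceless $d\times d$ matrices normalized so that $\mathrm{Tr}[\lambda_i\lambda_j]=d\,\delta_{ij}$. For a nonempty subset $\alpha\subseteq\{1,\dots,n\}$ and a state $\rho$ with reduced state $\rho_\alpha$, define $\|\tau_\alpha(\rho)\|^2=\sum_{(i_k)_{k\in\alpha}\in\{1,\dots,d^2-1\}^{\alpha}}\big(\mathrm{Tr}[\rho_\alpha\bigotimes_{k\in\alpha}\lambda_{i_k}]\big)^2$, and $\mathcal{C}_2(\rho)=\sum_{|\alpha|\ge 2}\|\tau_\alpha(\rho)\|^2$. *)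

From HB Require Import structures.
From mathcomp Require Import all_boot all_order all_algebra.
From mathcomp Require Import complex.
Set Implicit Arguments. Unset Strict Implicit. Unset Printing Implicit Defensive.
Import Order.TTheory GRing.Theory Num.Theory.
Local Open Scope ring_scope.

(* Computational basis labels of (C^d)^{\otimes n}: functions 'I_n -> 'I_d. *)
Definition cfg (n d : nat) := {ffun 'I_n -> 'I_d}.

(* Operators on (C^d)^{\otimes n} as matrices indexed by basis labels. *)
Definition op (R : rcfType) (n d : nat) := cfg n d -> cfg n d -> R[i].

Definition hermitian_mx (R : rcfType) (d : nat) (A : 'M[R[i]]_d) : Prop :=
  forall a b : 'I_d, A a b = (A b a)^*.

Definition gm_basis (R : rcfType) (d : nat) (lam : 'I_(d ^ 2) -> 'M[R[i]]_d) : Prop :=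
  [/\ forall i : 'I_(d ^ 2), val i = 0%N -> lam i = 1%:M,
      forall i : 'I_(d ^ 2), hermitian_mx (lam i),
      forall i : 'I_(d ^ 2), val i <> 0%N -> \tr (lam i) = 0 &
      forall i j : 'I_(d ^ 2), (1 <= val i)%N -> (1 <= val j)%N ->
        \tr (lam i *m lam j) = d%:R * (i == j)%:R].

Definition tensor_op (R : rcfType) (n d : nat) (lam : 'I_(d ^ 2) -> 'M[R[i]]_d)
  (s : {ffun 'I_n -> 'I_(d ^ 2)}) : op R n d :=
  fun x y => \prod_(k : 'I_n) lam (s k) (x k) (y k).

Definition tr_op (R : rcfType) (n d : nat) (rho A : op R n d) : R[i] :=
  \sum_(x : cfg n d) \sum_(y : cfg n d) rho x y * A y x.

(* Tr[rho_alpha \bigotimes_{k in alpha} lambda_{i_k}], written as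
   Tr[rho (\bigotimes_{k in alpha} lambda_{i_k} \otimes 1_{rest})], where the
   multi-index (i_k)_{k in alpha} is extended by 0 (lambda_0 = 1) outside alpha. *)
Definition corr (R : rcfType) (n d : nat) (lam : 'I_(d ^ 2) -> 'M[R[i]]_d)
  (rho : op R n d) (s : {ffun 'I_n -> 'I_(d ^ 2)}) : R[i] :=
  tr_op rho (tensor_op lam s).

(* ||tau_alpha(rho)||^2: sum over multi-indices with entries in {1..d^2-1}
   exactly on alpha (and 0, i.e. identity, outside alpha). *)
Definition tau_norm2 (R : rcfType) (n d : nat) (lam : 'I_(d ^ 2) -> 'M[R[i]]_d)
  (rho : op R n d) (alpha : {set 'I_n}) : R[i] :=
  \sum_(s : {ffun 'I_n -> 'I_(d ^ 2)} |
          [forall k : 'I_n, (val (s k) != 0%N) == (k \in alpha)])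
    (corr lam rho s) ^+ 2.

Definition C2 (R : rcfType) (n d : nat) (lam : 'I_(d ^ 2) -> 'M[R[i]]_d)
  (rho : op R n d) : R[i] :=
  \sum_(alpha : {set 'I_n} | (2 <= #|alpha|)%N) tau_norm2 lam rho alpha.

Definition unit_vec (R : rcfType) (n d : nat) (psi : cfg n d -> R[i]) : Prop :=
  \sum_(x : cfg n d) psi x * (psi x)^* = 1.

Definition reduced1 (R : rcfType) (n d : nat) (psi : cfg n d -> R[i]) (i : 'I_n)
  : 'M[R[i]]_d :=
  \matrix_(a < d, b < d)
    \sum_(x : cfg n d | x i == a) \sum_(y : cfg n d |
        (y i == b) && [forall k : 'I_n, (k != i) ==> (x k == y k)])
      psi x * (psi y)^*.

(* The correlations [corr lam rho s] are linear in [rho] and real on pure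
   states, so by convexity of the square [C2] of a mixture is at most the
   average of [C2] over its pure components.  For a pure state the squared
   correlations over all multi-indices sum to [d ^ n] (completeness of the
   basis [lam]); the empty set contributes 1 and the singleton {i} contributes
   [d Tr(rho_i^2) - 1].  Finally a density matrix of rank at most [k] has
   purity [Tr(rho_i^2) >= 1/k] by Cauchy-Schwarz in an orthonormal basis of its
   range. *)

From HB Require Import structures.
From mathcomp Require Import all_boot all_order all_algebra.
From mathcomp Require Import complex sesquilinear spectral ring.
Set Implicit Arguments. Unset Strict Implicit. Unset Printing Implicit Defensive.
Import Order.TTheory GRing.Theory Num.Theory.
Local Open Scope ring_scope.
Local Open Scope sesquilinear_scope.

Lemma sum_mul_delta (C : nzSemiRingType) (T : finType) (i : T) (F : T -> C) :
  \sum_j F j * (i == j)%:R = F i.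
Proof.
rewrite (bigD1 i) //= eqxx mulr1 big1 ?addr0 // => j /negbTE.
by rewrite eq_sym => ->; rewrite mulr0.
Qed.

Lemma prod_bool_natr (C : comNzSemiRingType) (T : finType) (P : pred T) (b : T -> bool) :
  \prod_(k | P k) ((b k)%:R : C) = [forall k, P k ==> b k]%:R.
Proof.
case: (boolP [forall k, P k ==> b k]) => [/forallP Pb | /forallPn [k]].
  by rewrite big1 // => k Pk; move: (Pb k); rewrite Pk /= => ->.
by rewrite negb_imply => /andP [Pk /negbTE bk]; rewrite (bigD1 k) //= bk mul0r.
Qed.

Lemma exchange_big4 (V : nmodType) (A B X Y : finType) (G : A -> B -> X -> Y -> V) :
  \sum_a \sum_b \sum_x \sum_y G a b x y = \sum_x \sum_y \sum_a \sum_b G a b x y.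
Proof.
rewrite pair_big (eq_bigr (fun p => \sum_(q : X * Y) G p.1 p.2 q.1 q.2)); last first.
  by move=> p _; rewrite pair_big.
by rewrite exchange_big [RHS]pair_big; apply: eq_bigr => q _; rewrite pair_big.
Qed.

Lemma cauchy_schwarz_sum (C : numClosedFieldType) r (x : 'I_r -> C) :
  (\sum_i x i) * (\sum_i x i)^* <= r%:R * \sum_i x i * (x i)^*.
Proof.
set S := \sum_i x i; set Q := \sum_i x i * (x i)^*.
have : 0 <= \sum_i \sum_j (x i - x j) * (x i - x j)^*.
  by do 2![apply: sumr_ge0 => ? _]; exact: mul_conjC_ge0.
have -> : \sum_i \sum_j (x i - x j) * (x i - x j)^* = 2%:R * (r%:R * Q - S * S^*).
  transitivity (\sum_i (r%:R * (x i * (x i)^*) + Q - x i * S^* - S * (x i)^*)).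
    apply: eq_bigr => i _.
    transitivity (\sum_j (x i * (x i)^* + x j * (x j)^* - x i * (x j)^* - x j * (x i)^*)).
      by apply: eq_bigr => j _; rewrite rmorphB /=; ring.
    rewrite !sumrB big_split /= sumr_const card_ord.
    by rewrite /S rmorph_sum /= mulr_sumr mulr_suml mulr_natl.
  rewrite !sumrB big_split /= sumr_const card_ord -mulr_sumr -mulr_suml -mulr_sumr.
  rewrite /S rmorph_sum /= -/S -/Q -mulr_natr; ring.
by rewrite pmulr_rge0 ?ltr0n // subr_ge0.
Qed.

Lemma jensen_sqr (C : numClosedFieldType) m (w c : 'I_m -> C) :
  (forall j, 0 <= w j) -> \sum_j w j = 1 -> (forall j, (c j)^* = c j) ->
  (\sum_j w j * c j) ^+ 2 <= \sum_j w j * c j ^+ 2.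
Proof.
move=> w_ge0 w_sum1 c_real; set mu := \sum_j w j * c j.
have mu_real : mu^* = mu.
  rewrite rmorph_sum; apply: eq_bigr => j _.
  by rewrite rmorphM /= c_real conj_Creal // ger0_real.
have : 0 <= \sum_j w j * ((c j - mu) * (c j - mu)^*).
  by apply: sumr_ge0 => j _; rewrite mulr_ge0 ?mul_conjC_ge0.
have -> : \sum_j w j * ((c j - mu) * (c j - mu)^*) = \sum_j w j * c j ^+ 2 - mu ^+ 2.
  transitivity (\sum_j (w j * c j ^+ 2 - 2%:R * mu * (w j * c j) + mu ^+ 2 * w j)).
    by apply: eq_bigr => j _; rewrite rmorphB /= c_real mu_real; ring.
  rewrite big_split sumrB /= -!mulr_sumr w_sum1 -/mu; ring.
by rewrite subr_ge0.
Qed.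

Lemma tight_frame_parseval (C : numClosedFieldType) (T X : finType) (f : T -> X -> C)
    (c : C) (A : X -> C) :
  (forall x x', \sum_t f t x * (f t x')^* = c * (x == x')%:R) ->
  \sum_t (\sum_x A x * f t x) * (\sum_x A x * f t x)^*
    = c * \sum_x A x * (A x)^*.
Proof.
move=> frame.
transitivity (\sum_t \sum_x \sum_x' A x * (A x')^* * (f t x * (f t x')^*)).
  apply: eq_bigr => t _; rewrite rmorph_sum mulr_suml; apply: eq_bigr => x _.
  by rewrite mulr_sumr; apply: eq_bigr => x' _; rewrite rmorphM /=; ring.
rewrite exchange_big mulr_sumr; apply: eq_bigr => x _; rewrite exchange_big /=.
under eq_bigr do rewrite -mulr_sumr frame mulrCA mulrA.
by rewrite sum_mul_delta mulrC.
Qed.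

Lemma trmxC_mul_scalar (C : numClosedFieldType) m (M : 'M[C]_m) (c : C) :
  c != 0 -> M *m M^t* = c%:M -> M^t* *m M = c%:M.
Proof.
move=> c_neq0 MMc.
have /mulmx1C : (c^-1 *: M) *m M^t* = 1%:M.
  by rewrite -scalemxAl MMc scale_scalar_mx mulVf.
rewrite -scalemxAr => /(congr1 ( *:%R c)).
by rewrite scalerA mulfV // scale1r scale_scalar_mx mulr1.
Qed.

Lemma mxtrace_mul_trmxC (C : numClosedFieldType) m (X : 'M[C]_m) :
  \tr (X *m X^t*) = \sum_i \sum_j X i j * (X i j)^*.
Proof. by apply: eq_bigr => i _; rewrite mxE; apply: eq_bigr => j _; rewrite !mxE. Qed.

Lemma mxtrace_sqr_le_rank (C : numClosedFieldType) m (A : 'M[C]_m) : A^t* = A ->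
  \tr A * (\tr A)^* <= (\rank A)%:R * \tr (A *m A).
Proof.
move=> A_herm.
set B := schmidt (row_base A).
have B_unitary : B \is unitarymx by apply: schmidt_unitarymx; exact: rank_leq_col.
have AB : (A <= B)%MS by rewrite -(eq_row_base A) schmidt_sub.
have projB p (Y : 'M_(p, m)) : (Y <= A)%MS -> Y *m B^t* *m B = Y.
  by move=> /submx_trans /(_ AB) /submxP [Z ->]; rewrite mulmxtVK.
set X := B *m A *m B^t*.
have trX : \tr X = \tr A by rewrite mxtrace_mulC mulmxA mxtrace_mulC mulmxA projB.
have trXX : \tr (X *m X) = \tr (A *m A).
  have -> : X *m X = B *m (A *m B^t* *m B *m A *m B^t*) by rewrite /X !mulmxA.
  by rewrite mxtrace_mulC projB // projB // mulmx_sub.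
have X_herm : X^t* = X by rewrite /X !trmx_mul !map_mxM trmxCK A_herm mulmxA.
rewrite -trX -trXX -[Y in \tr (_ *m Y)]X_herm mxtrace_mul_trmxC.
apply: le_trans (cauchy_schwarz_sum (fun i => X i i)) _.
rewrite ler_wpM2l ?ler0n // ler_sum // => i _.
by rewrite (bigD1 i) //= lerDl sumr_ge0 // => j _; exact: mul_conjC_ge0.
Qed.

Section GellMannBasis.
Variables (R : rcfType) (d : nat) (lam : 'I_(d ^ 2) -> 'M[R[i]]_d).
Hypothesis lamP : gm_basis lam.

Lemma gm_trace_mul t u : \tr (lam t *m lam u) = d%:R * (t == u)%:R.
Proof.
case: lamP => lam0 _ lam_tr0 lam_orth.
have [t0|t_neq0] := eqVneq (val t) 0%N; have [u0|u_neq0] := eqVneq (val u) 0%N.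
- have -> : t = u by apply: val_inj; rewrite t0 u0.
  by rewrite lam0 // mulmx1 mxtrace1 eqxx mulr1.
- rewrite lam0 // mul1mx lam_tr0; last exact/eqP.
  by rewrite (_ : t == u = false) ?mulr0 //; apply: contraNF u_neq0 => /eqP <-; rewrite t0.
- rewrite (lam0 u) // mulmx1 lam_tr0; last exact/eqP.
  by rewrite (_ : t == u = false) ?mulr0 //; apply: contraNF t_neq0 => /eqP ->; rewrite u0.
- by rewrite lam_orth ?lt0n.
Qed.

(* With the [mxvec (lam t)] as rows of a square matrix [M] (note that [d ^ 2]
   reduces to [d * d]), the trace orthogonality reads [M M^* = d], and squareness
   turns it into the column relation [M^* M = d]. *)
Lemma gm_frame : (0 < d)%N -> forall a b a' b' : 'I_d,
  \sum_t lam t a b * (lam t a' b')^* = d%:R * ((a, b) == (a', b'))%:R.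
Proof.
move=> d_gt0; case: (lamP) => _ lam_herm _ _.
have idx_bij := onT_bij (curry_mxvec_bij d d).
pose M : 'M[R[i]]_(d * d) := \matrix_(t, j) mxvec (lam t) 0 j.
have MM : M *m M^t* = d%:R%:M.
  apply/matrixP => t u; rewrite !mxE (reindex _ (onW_bij _ idx_bij)) /=.
  rewrite -[_ *+ (t == u)]mulr_natr -gm_trace_mul.
  transitivity (\sum_(p : 'I_d * 'I_d) lam t p.1 p.2 * lam u p.2 p.1).
    by apply: eq_bigr => -[a b] _; rewrite !mxE !mxvecE (lam_herm u b a).
  rewrite -(pair_bigA _ (fun a b => lam t a b * lam u b a)).
  by apply: eq_bigr => a _; rewrite mxE.
have d_neq0 : d%:R != 0 :> R[i] by rewrite pnatr_eq0 -lt0n.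
move=> a b a' b'; move: (trmxC_mul_scalar d_neq0 MM).
move=> /matrixP/(_ (mxvec_index a' b') (mxvec_index a b)).
have -> : ((a, b) == (a', b')) = (mxvec_index a' b' == mxvec_index a b).
  by rewrite eq_sym (inj_eq (bij_inj idx_bij) (a', b') (a, b)).
rewrite !mxE mulr_natr => <-.
by apply: eq_bigr => t _; rewrite !mxE !mxvecE mulrC.
Qed.
End GellMannBasis.

Definition pure_op (R : rcfType) (n d : nat) (psi : cfg n d -> R[i]) : op R n d :=
  fun x y => psi x * (psi y)^*.

Section Correlations.
Variables (R : rcfType) (n d : nat) (lam : 'I_(d ^ 2) -> 'M[R[i]]_d).
Hypothesis lam_herm : forall t, hermitian_mx (lam t).

Lemma tensor_op_adj s (x y : cfg n d) : tensor_op lam s y x = (tensor_op lam s x y)^*.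
Proof. by rewrite /tensor_op rmorph_prod; apply: eq_bigr => k _; exact: lam_herm. Qed.

Lemma corr_pure_real (psi : cfg n d -> R[i]) s :
  (corr lam (pure_op psi) s)^* = corr lam (pure_op psi) s.
Proof.
rewrite /corr /tr_op rmorph_sum [RHS]exchange_big; apply: eq_bigr => x _.
rewrite rmorph_sum; apply: eq_bigr => y _ /=.
by rewrite !rmorphM /= conjCK tensor_op_adj conjCK [_ * psi y]mulrC.
Qed.

Lemma corr_mixture m (p : 'I_m -> R[i]) (psi : 'I_m -> cfg n d -> R[i])
    (rho : op R n d) s :
  (forall x y, rho x y = \sum_j p j * psi j x * (psi j y)^*) ->
  corr lam rho s = \sum_j p j * corr lam (pure_op (psi j)) s.
Proof.
move=> rhoE; rewrite /corr /tr_op.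
transitivity (\sum_x \sum_j \sum_y p j * (pure_op (psi j) x y * tensor_op lam s y x)).
  apply: eq_bigr => x _; rewrite exchange_big; apply: eq_bigr => y _.
  by rewrite rhoE mulr_suml; apply: eq_bigr => j _; rewrite /pure_op !mulrA.
rewrite exchange_big; apply: eq_bigr => j _.
by rewrite mulr_sumr; under [RHS]eq_bigr do rewrite mulr_sumr.
Qed.

Lemma sum_tau_norm2 (rho : op R n d) :
  \sum_alpha tau_norm2 lam rho alpha = \sum_s corr lam rho s ^+ 2.
Proof.
pose support (s : {ffun 'I_n -> 'I_(d ^ 2)}) := [set k | val (s k) != 0%N].
rewrite [RHS](partition_big support xpredT) //.
apply: eq_bigr => alpha _; apply: eq_bigl => s /=.
apply/forallP/eqP => [s_supp | <- k]; last by rewrite inE.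
by apply/setP => k; rewrite inE; move/eqP: (s_supp k).
Qed.

Lemma C2_le_mixture m (p : 'I_m -> R[i]) (psi : 'I_m -> cfg n d -> R[i])
    (rho : op R n d) :
  (forall j, 0 <= p j) -> \sum_j p j = 1 ->
  (forall x y, rho x y = \sum_j p j * psi j x * (psi j y)^*) ->
  C2 lam rho <= \sum_j p j * C2 lam (pure_op (psi j)).
Proof.
move=> p_ge0 p_sum1 rhoE; rewrite /C2 /tau_norm2.
rewrite [X in _ <= X](eq_bigr _ (fun j _ => big_distrr _ _ _)) exchange_big.
apply: ler_sum => alpha _.
rewrite [X in _ <= X](eq_bigr _ (fun j _ => big_distrr _ _ _)) exchange_big.
apply: ler_sum => s _; rewrite (corr_mixture s rhoE).
by apply: jensen_sqr => // j; exact: corr_pure_real.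
Qed.

End Correlations.

Definition agree_off (n d : nat) (i : 'I_n) (x y : cfg n d) :=
  [forall k, (k != i) ==> (x k == y k)].

Lemma agree_offC n d (i : 'I_n) (x y : cfg n d) : agree_off i x y = agree_off i y x.
Proof. by apply: eq_forallb => k; rewrite (eq_sym (x k)). Qed.

Section PureState.
Variables (R : rcfType) (n d : nat) (lam : 'I_(d ^ 2) -> 'M[R[i]]_d).
Variable psi : cfg n d -> R[i].
Hypotheses (lamP : gm_basis lam) (d_gt0 : (0 < d)%N) (psi_unit : unit_vec psi).

Let d2_gt0 : (0 < d ^ 2)%N. Proof. by rewrite expn_gt0 d_gt0. Qed.
Let idx0 : 'I_(d ^ 2) := Ordinal d2_gt0.
Let s0 : {ffun 'I_n -> 'I_(d ^ 2)} := [ffun => idx0].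

Lemma tensor_op_frame (x y x' y' : cfg n d) :
  \sum_s tensor_op lam s y x * (tensor_op lam s y' x')^*
    = (d ^ n)%:R * ((x, y) == (x', y'))%:R.
Proof.
transitivity (\sum_(s : {ffun 'I_n -> 'I_(d ^ 2)})
    \prod_k (lam (s k) (y k) (x k) * (lam (s k) (y' k) (x' k))^*)).
  by apply: eq_bigr => s _; rewrite /tensor_op rmorph_prod -big_split.
rewrite -(bigA_distr_bigA (fun k t => lam t (y k) (x k) * (lam t (y' k) (x' k))^*)) /=.
under eq_bigr do rewrite gm_frame //.
rewrite big_split /= prodr_const card_ord natrX prod_bool_natr.
congr (_ * (nat_of_bool _)%:R); apply/forallP/eqP => [eq_yx | [-> ->] k]; last by rewrite eqxx.
by congr pair; apply/ffunP => k; move: (eq_yx k);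
  rewrite /= xpair_eqE => /andP [/eqP ? /eqP ?].
Qed.

Lemma sum_corr_pure_sqr : \sum_s corr lam (pure_op psi) s ^+ 2 = (d ^ n)%:R.
Proof.
case: (lamP) => _ lam_herm _ _.
pose f s (p : cfg n d * cfg n d) := tensor_op lam s p.2 p.1.
transitivity (\sum_s (\sum_p pure_op psi p.1 p.2 * f s p)
  * (\sum_p pure_op psi p.1 p.2 * f s p)^*).
  apply: eq_bigr => s _; rewrite expr2 -{2}(corr_pure_real lam_herm) /corr /tr_op.
  by rewrite (pair_bigA _ (fun x y => pure_op psi x y * tensor_op lam s y x)).
rewrite (tight_frame_parseval (c := (d ^ n)%:R)) => [|[x y] [x' y']]; last exact: tensor_op_frame.
rewrite -(pair_bigA _ (fun x y => pure_op psi x y * (pure_op psi x y)^*)) /=.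
have -> : \sum_x \sum_y pure_op psi x y * (pure_op psi x y)^*
    = (\sum_x psi x * (psi x)^*) * (\sum_y psi y * (psi y)^*).
  rewrite mulr_suml; apply: eq_bigr => x _; rewrite mulr_sumr; apply: eq_bigr => y _.
  by rewrite /pure_op rmorphM /= conjCK; ring.
by rewrite psi_unit !mulr1.
Qed.

Lemma reduced1E (i : 'I_n) a b :
  reduced1 psi i a b = \sum_(x : cfg n d) \sum_(y : cfg n d)
    (x i == a)%:R * (y i == b)%:R * (agree_off i x y)%:R * (psi x * (psi y)^*).
Proof.
rewrite mxE (big_mkcond (fun x : cfg n d => x i == a)); apply: eq_bigr => x _.
rewrite big_mkcond; case: (x i == a); last by rewrite big1 // => y _; rewrite !mul0r.
by apply: eq_bigr => y _; rewrite /agree_off; case: (y i == b); case: [forall _, _];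
  rewrite /= ?mul1r ?mul0r.
Qed.

Lemma reduced1_pairing (i : 'I_n) (L : 'M[R[i]]_d) :
  \sum_a \sum_b reduced1 psi i a b * L b a
    = \sum_(x : cfg n d) \sum_(y : cfg n d)
        (agree_off i x y)%:R * (psi x * (psi y)^*) * L (y i) (x i).
Proof.
transitivity (\sum_a \sum_b \sum_(x : cfg n d) \sum_(y : cfg n d)
   ((agree_off i x y)%:R * (psi x * (psi y)^*) * L b a * (y i == b)%:R) * (x i == a)%:R).
  apply: eq_bigr => a _; apply: eq_bigr => b _; rewrite reduced1E mulr_suml.
  by apply: eq_bigr => x _; rewrite mulr_suml; apply: eq_bigr => y _; ring.
rewrite exchange_big4; apply: eq_bigr => x _; apply: eq_bigr => y _.
by under eq_bigr do rewrite -mulr_suml sum_mul_delta; rewrite sum_mul_delta.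
Qed.

Lemma corr_local (i : 'I_n) (s : {ffun 'I_n -> 'I_(d ^ 2)}) :
  (forall k, k != i -> val (s k) = 0%N) ->
  corr lam (pure_op psi) s = \sum_a \sum_b reduced1 psi i a b * lam (s i) b a.
Proof.
case: lamP => lam0 _ _ _ s_supp; rewrite reduced1_pairing.
apply: eq_bigr => x _; apply: eq_bigr => y _; rewrite /tensor_op (bigD1 i) //=.
rewrite (eq_bigr (fun k => (y k == x k)%:R)) => [|k /s_supp sk0]; last first.
  by rewrite lam0 // mxE.
by rewrite prod_bool_natr -/(agree_off i y x) agree_offC /pure_op; ring.
Qed.

Lemma corr_trivial (s : {ffun 'I_n -> 'I_(d ^ 2)}) :
  (forall k, val (s k) = 0%N) -> corr lam (pure_op psi) s = 1.
Proof.
case: lamP => lam0 _ _ _ s_trivial; rewrite -psi_unit; apply: eq_bigr => x _.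
rewrite (eq_bigr (fun y => psi x * (psi y)^* * (x == y)%:R)) ?sum_mul_delta // => y _.
rewrite /tensor_op (eq_bigr (fun k => (y k == x k)%:R)) => [|k _]; last by rewrite lam0 // mxE.
rewrite prod_bool_natr; congr (_ * (nat_of_bool _)%:R).
apply/forallP/eqP => [eq_yx | -> k]; last by rewrite eqxx.
by apply/ffunP => k; apply/esym/eqP/eq_yx.
Qed.

Lemma mxtrace_reduced1 (i : 'I_n) : \tr (reduced1 psi i) = 1.
Proof.
have lam_s0 : lam (s0 i) = 1%:M by case: lamP => lam0 _ _ _; rewrite lam0 // ffunE.
rewrite -(@corr_trivial s0) => [|k]; last by rewrite ffunE.
rewrite (@corr_local i) => [|k _]; last by rewrite ffunE.
rewrite lam_s0; apply: eq_bigr => a _.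
rewrite (eq_bigr (fun b => reduced1 psi i a b * (a == b)%:R)) ?sum_mul_delta // => b _.
by rewrite [_%:M _ _]mxE eq_sym.
Qed.

Lemma reduced1_herm (i : 'I_n) : (reduced1 psi i)^t* = reduced1 psi i.
Proof.
apply/matrixP => a b; rewrite mxE [_^T _ _]mxE !reduced1E rmorph_sum exchange_big.
apply: eq_bigr => y _; rewrite rmorph_sum; apply: eq_bigr => x _ /=.
by rewrite !rmorphM /= !conjC_nat conjCK agree_offC; ring.
Qed.

Lemma tau_norm2_set0 : tau_norm2 lam (pure_op psi) set0 = 1.
Proof.
rewrite /tau_norm2 (big_pred1 s0) => [|s]; last first.
  apply/forallP/eqP => [supp | -> k]; last by rewrite ffunE inE.
  apply/ffunP => k; rewrite ffunE; apply: val_inj => /=.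
  by move: (supp k); rewrite inE eqbF_neg negbK => /eqP.
by rewrite corr_trivial ?expr1n // => k; rewrite ffunE.
Qed.

Lemma tau_norm2_set1 (i : 'I_n) :
  tau_norm2 lam (pure_op psi) [set i] = d%:R * \tr (reduced1 psi i *m reduced1 psi i) - 1.
Proof.
case: (lamP) => _ lam_herm _ _.
pose at_i t : {ffun 'I_n -> 'I_(d ^ 2)} := [ffun k => if k == i then t else idx0].
pose g t := \sum_a \sum_b reduced1 psi i a b * lam t b a.
have corr_at_i t : corr lam (pure_op psi) (at_i t) = g t.
  by rewrite (corr_local (i := i)) ?ffunE ?eqxx // => k /negbTE; rewrite ffunE => ->.
have g_real t : (g t)^* = g t by rewrite -corr_at_i corr_pure_real.
have g_idx0 : g idx0 = 1.
  by rewrite -corr_at_i corr_trivial // => k; rewrite ffunE; case: ifP.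
have sum_g : \sum_t g t * (g t)^* = d%:R * \tr (reduced1 psi i *m reduced1 psi i).
  rewrite -{2}(reduced1_herm i) mxtrace_mul_trmxC pair_bigA.
  pose f t (p : 'I_d * 'I_d) := lam t p.2 p.1.
  rewrite -(tight_frame_parseval (f := f)) => [|[a b] [a' b']].
    by apply: eq_bigr => t _; rewrite /g pair_bigA.
  by rewrite gm_frame // !xpair_eqE andbC.
rewrite /tau_norm2 (reindex_onto at_i (fun s => s i)) /= => [|s /forallP supp]; last first.
  apply/ffunP => k; rewrite ffunE; case: eqP => [-> //|/eqP k_neq_i]; apply: val_inj => /=.
  by move: (supp k); rewrite inE (negbTE k_neq_i) eqbF_neg negbK => /eqP.
rewrite (eq_bigl (fun t => t != idx0)) => [|t]; last first.
  rewrite [at_i t i]ffunE !eqxx andbT; apply/forallP/idP => [/(_ i)|t_neq0 k].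
    by rewrite ffunE inE eqxx eqb_id; apply: contra => /eqP ->.
  rewrite ffunE in_set1; case: (boolP (k == i)) => //= _.
  by rewrite eqb_id; apply: contra t_neq0 => /eqP t0E; apply/eqP/val_inj.
rewrite -sum_g [in RHS](bigD1 idx0) //= g_idx0 conjC1 mulr1 addrAC subrr add0r.
by apply: eq_bigr => t _; rewrite corr_at_i expr2 g_real.
Qed.

End PureState.

Lemma sum_subsets_split (V : nmodType) n (F : {set 'I_n} -> V) :
  \sum_(A : {set 'I_n}) F A
    = \sum_(A : {set 'I_n} | (2 <= #|A|)%N) F A + F set0 + \sum_i F [set i].
Proof.
rewrite (bigID (fun A : {set 'I_n} => (2 <= #|A|)%N)) /= -addrA; congr (_ + _).
rewrite (bigD1 set0) /= ?cards0 //; congr (_ + _).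
rewrite -(big_imset _ (in2W (@set1_inj _))) /=; apply: eq_bigl => A.
apply/andP/imsetP => [[A_small A_neq0] | [x _ ->]]; last first.
  by rewrite cards1; split => //; apply/eqP/setP => /(_ x); rewrite !inE eqxx.
have /cards1P [x ->] : #|A| == 1%N by rewrite eqn_leq -ltnS ltnNge A_small lt0n cards_eq0.
by exists x.
Qed.

Lemma inv_rank_le_mxtrace_sqr (C : numClosedFieldType) m (A : 'M[C]_m) (k : nat) :
  A^t* = A -> \tr A = 1 -> (0 < k)%N -> (\rank A <= k)%N -> k%:R^-1 <= \tr (A *m A).
Proof.
move=> A_herm trA1 k_gt0 rank_le.
have trAA_ge0 : 0 <= \tr (A *m A).
  rewrite -[X in _ *m X]A_herm mxtrace_mul_trmxC.
  by do 2![apply: sumr_ge0 => ? _]; exact: mul_conjC_ge0.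
have := mxtrace_sqr_le_rank A_herm; rewrite trA1 conjC1 mulr1 => rank_bound.
rewrite -[k%:R^-1]mulr1 ler_pdivrMl ?ltr0n //.
by apply: le_trans rank_bound _; rewrite ler_wpM2r // ler_nat.
Qed.

Lemma C2_pure_le (R : rcfType) n d (k : 'I_n -> nat) (lam : 'I_(d ^ 2) -> 'M[R[i]]_d)
    (psi : cfg n d -> R[i]) :
  gm_basis lam -> (0 < d)%N -> unit_vec psi -> (forall i, (0 < k i)%N) ->
  (forall i, (\rank (reduced1 psi i) <= k i)%N) ->
  C2 lam (pure_op psi) <= (d ^ n)%:R + n%:R - 1 - \sum_(i < n) d%:R / (k i)%:R.
Proof.
move=> lamP d_gt0 psi_unit k_gt0 rank_le.
have decomp := sum_subsets_split (tau_norm2 lam (pure_op psi)).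
rewrite sum_tau_norm2 sum_corr_pure_sqr // tau_norm2_set0 // in decomp.
rewrite (eq_bigr _ (fun i _ => tau_norm2_set1 lamP d_gt0 psi_unit i)) in decomp.
have -> : C2 lam (pure_op psi)
    = (d ^ n)%:R - 1 - \sum_i (d%:R * \tr (reduced1 psi i *m reduced1 psi i) - 1).
  by rewrite decomp /C2; ring.
have -> : (d ^ n)%:R + n%:R - 1 - \sum_(i < n) d%:R / (k i)%:R
    = (d ^ n)%:R - 1 - \sum_i (d%:R / (k i)%:R - 1) :> R[i].
  by rewrite sumrB sumr_const card_ord; ring.
rewrite lerB // ler_sum // => i _; rewrite lerD2r ler_wpM2l ?ler0n //.
exact: inv_rank_le_mxtrace_sqr (reduced1_herm psi i) (mxtrace_reduced1 lamP d_gt0 psi_unit i)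
  (k_gt0 i) (rank_le i).
Qed.

Local Open Scope complex_scope.

Theorem theorem3 (R : rcfType) (n d : nat) (k : 'I_n -> nat)
  (lam : 'I_(d ^ 2) -> 'M[R[i]]_d)
  (m : nat) (p : 'I_m -> R) (psi : 'I_m -> cfg n d -> R[i]) (rho : op R n d) :
  (1 <= n)%N -> (2 <= d)%N ->
  (forall i : 'I_n, (1 <= k i <= d)%N) ->
  gm_basis lam ->
  (forall j : 'I_m, 0 <= p j) -> \sum_(j < m) p j = 1 ->
  (forall j : 'I_m, unit_vec (psi j)) ->
  (forall j : 'I_m, forall i : 'I_n, (\rank (reduced1 (psi j) i) <= k i)%N) ->
  (forall x y : cfg n d, rho x y = \sum_(j < m) (p j)%:C * psi j x * (psi j y)^*) ->
  C2 lam rho <= (d ^ n)%:R + n%:R - 1 - \sum_(i < n) d%:R / (k i)%:R.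
Proof.
move=> _ d_ge2 k_range lamP p_ge0 p_sum1 psi_unit rank_le rhoE.
have d_gt0 : (0 < d)%N := ltnW d_ge2.
have [_ lam_herm _ _] := lamP.
have k_gt0 i : (0 < k i)%N by case/andP: (k_range i).
have w_ge0 j : 0 <= (p j)%:C :> R[i] by rewrite ler0c.
have w_sum1 : \sum_j (p j)%:C = 1 :> R[i] by rewrite -(rmorph_sum (real_complex R)) p_sum1.
apply: le_trans (C2_le_mixture lam_herm w_ge0 w_sum1 rhoE) _.
set bound := (X in _ <= X).
rewrite -[bound]mul1r -w_sum1 mulr_suml ler_sum // => j _.
by rewrite ler_wpM2l // (C2_pure_le lamP d_gt0 (psi_unit j) k_gt0 (rank_le j)).
Qed.
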